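(* Let $p$ be a binary word of length $l$ with exactly $2$ runs. For every $n\ge l$, every $p$-optimal binary word of length $n$ has exactly $2$ runs.
   Context: $c_p(w)$ is the number of occurrences of $p$ as a (not necessarily consecutive) subsequence of $w$. $M_{n,p}=\max\{c_p(w): w\in\{0,1\}^n\}$; a binary word $w$ of length $n$ is $p$-optimal if $c_p(w)=M_{n,p}$. A run is a maximal block of consecutive equal letters. *)

From mathcomp Require Import all_boot.
Set Implicit Arguments. Unset Strict Implicit. Unset Printing Implicit Defensive.

(* Binary words are sequences of booleans (false = 0, true = 1). *)

(* c_p(w): number of occurrences of p as a (not necessarily consecutive)
   subsequence of w, i.e. number of index subsets of positions of w
   (encoded as selection masks m of length |w|) whose selected letters,
   read in order, spell p. *)
Definition occ (p w : seq bool) : nat :=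
  #|[set m : (size w).-tuple bool | mask m w == p]|.

Definition Mnp (n : nat) (p : seq bool) : nat :=
  \max_(w : n.-tuple bool) occ p w.

Definition p_optimal (p w : seq bool) : Prop := occ p w = Mnp (size w) p.

Definition runs (w : seq bool) : nat :=
  match w with
  | [::] => 0
  | x :: s => (count (fun b => b) (pairmap (fun a b => a != b) x s)).+1
  end.

From mathcomp Require Import all_boot.
Set Implicit Arguments. Unset Strict Implicit. Unset Printing Implicit Defensive.

(* A two-run pattern is p = c^a d^b with a, b > 0 and d = ~~ c.
   1. occ p w is computed by the usual recursion [subseq_count] on w.
   2. For a word w with z letters c and o letters d, every occurrence of p
      picks a of the c's and b of the d's, so occ p w <= C(z,a) * C(o,b);
      the two-block word c^z d^o attains this bound.
   3. Rigidity: if a, b > 0, a <= z, b <= o and the bound is attained, then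
      w = c^z d^o (a letter d in front of a later c would lose occurrences).
   4. If w is p-optimal of length n >= a + b, then comparing with c^z d^o
      shows w attains the bound, and comparing with c^a d^(n-a) shows the
      maximum is positive, whence a <= z and b <= o; so w = c^z d^o with
      z, o > 0, which has exactly two runs. *)

(* The number of occurrences of p as a subsequence of w, by recursion on w:
   an occurrence either skips the first letter or matches it with p's head. *)
Fixpoint subseq_count (p w : seq bool) : nat :=
  match w with
  | [::] => p == [::]
  | x :: w' => subseq_count p w' +
      if p is y :: p' then (x == y) * subseq_count p' w' else 0
  end.

Lemma card_set_tuple k (P : k.-tuple bool -> bool) :
  #|[set m : k.-tuple bool | P m]| = \sum_(m : k.-tuple bool) P m.
Proof. by rewrite -sum1_card big_mkcond /=; apply: eq_bigr => m _; rewrite inE. Qed.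

Lemma sum_tupleS (T : finType) k (F : k.+1.-tuple T -> nat) :
  \sum_(m : k.+1.-tuple T) F m = \sum_(x : T) \sum_(m : k.-tuple T) F [tuple of x :: m].
Proof.
rewrite pair_big /= (reindex (fun xt : T * k.-tuple T => [tuple of xt.1 :: xt.2])) //=.
exists (fun m => (thead m, [tuple of behead m])).
  by move=> [x t] _ /=; rewrite theadE; congr pair; apply: val_inj.
by move=> m _ /=; rewrite [in RHS](tuple_eta m).
Qed.

Lemma occE p w : occ p w = subseq_count p w.
Proof.
rewrite /occ card_set_tuple; elim: w p => [|x w IH] p /=.
  rewrite (eq_bigr (fun _ => nat_of_bool (p == [::]))); last first.
    by move=> m _; rewrite (size0nil (size_tuple m)) eq_sym.
  by rewrite sum_nat_const card_tuple expn0 mul1n.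
rewrite sum_tupleS big_bool /= addnC -IH; congr (_ + _).
case: p => [|y p'] /=; first by rewrite big1.
case: (eqVneq x y) => [<-|nxy] /=.
  by rewrite mul1n -IH; apply: eq_bigr => m _; rewrite eqseq_cons eqxx.
by rewrite mul0n big1 // => m _; rewrite eqseq_cons (negbTE nxy).
Qed.

Lemma letter_cases (x c : bool) : x = c \/ x = ~~ c.
Proof. by case: x; case: c; auto. Qed.

Lemma letter_neq_negb (c : bool) : (c == ~~ c) = false.
Proof. by case: c. Qed.

Lemma negb_neq_letter (c : bool) : (~~ c == c) = false.
Proof. by case: c. Qed.

Definition blocks (c : bool) (a b : nat) : seq bool := nseq a c ++ nseq b (~~ c).

Lemma size_blocks c a b : size (blocks c a b) = a + b.
Proof. by rewrite size_cat !size_nseq. Qed.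

Lemma count_blocks c a b : count_mem c (blocks c a b) = a.
Proof. by rewrite count_cat !count_nseq /= eqxx negb_neq_letter mul1n addn0. Qed.

Lemma count_negb_blocks c a b : count_mem (~~ c) (blocks c a b) = b.
Proof. by rewrite count_cat !count_nseq /= eqxx letter_neq_negb mul1n. Qed.

Lemma count_letter_negb (c : bool) w : count_mem c w + count_mem (~~ c) w = size w.
Proof. by elim: w => //= x w <-; case: x; case: c; rewrite /= ?addnS. Qed.

Lemma count_mem0_nseq (c : bool) w :
  count_mem c w = 0 -> w = nseq (count_mem (~~ c) w) (~~ c).
Proof.
elim: w => [|x w IH] //=; have [->|->] := letter_cases x c.
  by rewrite eqxx.
by rewrite eqxx negb_neq_letter => /IH {1}->.
Qed.

(* Occurrences of the single-block pattern d^b are the b-subsets of d's. *)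
Lemma subseq_count_nseq d b w : subseq_count (nseq b d) w = 'C(count_mem d w, b).
Proof.
elim: w b => [|x w IH] [|b] //=.
  by rewrite addn0 -[[::]]/(nseq 0 d) IH !bin0.
rewrite -[d :: nseq b d]/(nseq b.+1 d) !IH.
by case: (x == d); rewrite ?mul1n ?mul0n ?addn0 ?add1n ?binS.
Qed.

Lemma subseq_count_blocks_cons c a b x w :
  subseq_count (blocks c a.+1 b) (x :: w) =
  subseq_count (blocks c a.+1 b) w + (x == c) * subseq_count (blocks c a b) w.
Proof. by []. Qed.

(* The counting bound: an occurrence of c^a d^b chooses a c's and b d's. *)
Lemma subseq_count_blocks_le c a b w :
  subseq_count (blocks c a b) w <= 'C(count_mem c w, a) * 'C(count_mem (~~ c) w, b).
Proof.
elim: w a => [|x w IH] [|a]; rewrite ?subseq_count_nseq ?bin0 ?mul1n //.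
rewrite subseq_count_blocks_cons /=; have [->|->] := letter_cases x c.
  rewrite eqxx letter_neq_negb mul1n add1n binS mulnDl.
  exact: leq_add (IH a.+1) (IH a).
rewrite negb_neq_letter eqxx mul0n addn0 add0n.
by apply: leq_trans (IH a.+1) _; rewrite leq_mul // leq_bin2l.
Qed.

Lemma subseq_count_blocks c a b z o :
  subseq_count (blocks c a b) (blocks c z o) = 'C(z, a) * 'C(o, b).
Proof.
elim: z a => [|z IH] [|a].
- by rewrite subseq_count_nseq count_negb_blocks bin0 mul1n.
- apply/eqP; rewrite eqn_leq leq0n andbT.
  by have := subseq_count_blocks_le c a.+1 b (blocks c 0 o); rewrite count_blocks.
- by rewrite subseq_count_nseq count_negb_blocks bin0 mul1n.
by rewrite [blocks c z.+1 o]/= subseq_count_blocks_cons !IH eqxx mul1n binS mulnDl.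
Qed.

Lemma ltn_binS n b : 0 < b -> b <= n.+1 -> 'C(n, b) < 'C(n.+1, b).
Proof.
case: b => // b _ b_le; rewrite binS -[X in X < _]addn0 ltn_add2l bin_gt0.
by rewrite -ltnS.
Qed.

Lemma subseq_count_blocks_eq c a b w :
  0 < a -> 0 < b -> a <= count_mem c w -> b <= count_mem (~~ c) w ->
  subseq_count (blocks c a b) w = 'C(count_mem c w, a) * 'C(count_mem (~~ c) w, b) ->
  w = blocks c (count_mem c w) (count_mem (~~ c) w).
Proof.
elim: w a => [|x w IH] [|a] // _ b_gt0.
rewrite subseq_count_blocks_cons; have [->|->] := letter_cases x c => /=.
  rewrite eqxx letter_neq_negb mul1n add1n add0n binS mulnDl ltnS => a_le b_le eq_sum.
  have := leqif_add (leqif_eq (subseq_count_blocks_le c a.+1 b w))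
                    (leqif_eq (subseq_count_blocks_le c a b w)).
  rewrite eq_sum => -[_]; rewrite eqxx => /esym/andP[/eqP eq1 /eqP eq2].
  case: (ltnP a (count_mem c w)) => [a_lt|a_ge].
    by rewrite [w in LHS](IH a.+1).
  have count_c : count_mem c w = a by apply/eqP; rewrite eqn_leq a_ge a_le.
  case: a IH a_le eq2 count_c {a_ge eq_sum eq1} => [|a] IH _ eq2 count_c.
    by rewrite count_c [w in LHS](count_mem0_nseq count_c).
  by rewrite [w in LHS](IH a.+1) // count_c.
rewrite negb_neq_letter eqxx mul0n addn0 add0n add1n => a_le b_le eq_bound.
have := subseq_count_blocks_le c a.+1 b w.
by rewrite eq_bound leq_pmul2l ?bin_gt0 // leqNgt ltn_binS ?b_gt0.
Qed.

Definition letter_changes (x : bool) (s : seq bool) : nat :=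
  count (fun b => b) (pairmap (fun a b => a != b) x s).

Lemma letter_changes0 x s : letter_changes x s = 0 -> s = nseq (size s) x.
Proof.
rewrite /letter_changes; elim: s x => [|y s IH] x //=.
by case: (eqVneq x y) => [<- /IH {1}->|].
Qed.

Lemma letter_changes1 x s : letter_changes x s = 1 ->
  exists a b, [/\ 0 < a, 0 < b & x :: s = blocks x a b].
Proof.
rewrite /letter_changes; elim: s x => [|y s IH] x //=.
case: (eqVneq x y) => [<- /IH [a [b [_ b_gt0 ->]]]|x_neq_y [] /letter_changes0 s_const].
  by exists a.+1, b.
exists 1, (size s).+1; split=> //.
have y_eq : y = ~~ x by case: x y x_neq_y {s_const} => -[].
by rewrite {1}s_const y_eq.
Qed.

Lemma runs_two_blocks p : runs p = 2 -> exists c a b, [/\ 0 < a, 0 < b & p = blocks c a b].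
Proof. by case: p => // x s [] /letter_changes1 [a [b [a_gt0 b_gt0 ->]]]; exists x, a, b. Qed.

Lemma runs_blocks c z o : 0 < z -> 0 < o -> runs (blocks c z o) = 2.
Proof.
case: z => // z _; case: o => // o _; congr S; rewrite /blocks /=.
elim: z => [|z IH] /=; last by rewrite eqxx.
rewrite letter_neq_negb add1n; congr S.
by elim: o => //= o ->; rewrite eqxx.
Qed.

Lemma occ_le_Mnp p w : occ p w <= Mnp (size w) p.
Proof. exact: (@leq_bigmax _ (fun t : (size w).-tuple bool => occ p t) (in_tuple w)). Qed.

Theorem mainTheorem9 (p : seq bool) :
  runs p = 2 ->
  forall (n : nat), size p <= n ->
  forall (w : seq bool), size w = n -> p_optimal p w -> runs w = 2.
Proof.
move=> /runs_two_blocks [c [a [b [a_gt0 b_gt0 ->]]]] n le_p_n w size_w optimal.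
set z := count_mem c w; set o := count_mem (~~ c) w.
have size_zo : z + o = size w := count_letter_negb c w.
(* Being optimal, w does at least as well as the two-block word c^z d^o. *)
have sorted_le : 'C(z, a) * 'C(o, b) <= occ (blocks c a b) w.
  rewrite optimal -(subseq_count_blocks c a b z o) -occE.
  by rewrite -size_zo -(size_blocks c z o) occ_le_Mnp.
(* The word c^a d^(n-a) shows that the maximum is positive. *)
have le_a_n : a <= n by apply: leq_trans le_p_n; rewrite size_blocks leq_addr.
have Mnp_gt0 : 0 < occ (blocks c a b) w.
  rewrite optimal size_w -(subnKC le_a_n) -(size_blocks c a (n - a)).
  apply: leq_trans (occ_le_Mnp _ _).
  rewrite occE subseq_count_blocks binn mul1n bin_gt0 leq_subRL //.
  by rewrite -(size_blocks c a b).
have attained : subseq_count (blocks c a b) w = 'C(z, a) * 'C(o, b).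
  by apply/eqP; rewrite eqn_leq subseq_count_blocks_le -occE sorted_le.
have /andP[a_le b_le] : (a <= z) && (b <= o).
  by rewrite -bin_gt0 -[b <= o]bin_gt0 -muln_gt0 -attained -occE.
rewrite (subseq_count_blocks_eq a_gt0 b_gt0 a_le b_le attained) runs_blocks //.
- exact: leq_trans a_le.
- exact: leq_trans b_le.
Qed.
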